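(* Let $E$ be a set and regard the power set $\mathscr{P}(E)$ as the Boolean ring $(\mathbf{Z}/2\mathbf{Z})^E$, with addition the symmetric difference, multiplication the intersection, $0=\emptyset$ and $1=-1=E$. For $X\subseteq \mathscr{P}(E)$ set $\mathcal{R}(X)=X\cup\{-1,0,1\}\cup\{x+y : x,y\in X\}\cup\{xy : x,y\in X\}$. Let $(\mathscr{X}_i)_{i\in\mathbf{N}}$ be an increasing sequence of subsets of $\mathscr{P}(E)$ such that $\mathcal{R}(\mathscr{X}_i)\subseteq\mathscr{X}_{i+1}$ for all $i$ and $\bigcup_{i\in\mathbf{N}}\mathscr{X}_i=\mathscr{P}(E)$. Then $\mathscr{P}(E)=\mathscr{X}_i$ for some $i$. *)

From Stdlib Require Import Bool.

Definition bset (E : Type) := E -> bool.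

Definition bzero {E : Type} : bset E := fun _ => false.
Definition bone {E : Type} : bset E := fun _ => true.
Definition bopp {E : Type} (x : bset E) : bset E := x.         (* -x = x in char 2 *)
Definition bneg_one {E : Type} : bset E := bopp bone.
Definition badd {E : Type} (x y : bset E) : bset E :=
  fun e => xorb (x e) (y e).
Definition bmul {E : Type} (x y : bset E) : bset E :=
  fun e => andb (x e) (y e).

Definition Rclos {E : Type} (X : bset E -> Prop) : bset E -> Prop :=
  fun z => X z \/ z = bneg_one \/ z = bzero \/ z = bone
        \/ (exists x y, X x /\ X y /\ z = badd x y)
        \/ (exists x y, X x /\ X y /\ z = bmul x y).

(* Call a set A good when there is one j such that every subset of A lies in
   X_j.  A disjoint sequence (F_n) of bad sets is impossible: choose y_n ⊆ F_n
   outside X_{max(n, r_n) + 1}, where F_n ∈ X_{r_n}; the union Y of the y_n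
   lies in some X_K, and then y_K = Y ∩ F_K lies in X_{max(K, r_K) + 1}.
   So it suffices to produce such a sequence when E is bad.  If some index S0
   witnesses the goodness of every good set, every bad set R ∈ X_r splits into
   two bad pieces (a subset D of R outside X_{max(r, S0) + 1}, and R \ D since
   D = R + (R \ D)), and peeling pieces off E one at a time gives the
   sequence.  Otherwise an increasing chain of good sets U_n can be grown so
   that the n-th increment D_n has a subset outside X_n; regrouping the
   disjoint D_n along the Cantor pairing into infinitely many infinite unions
   gives the sequence. *)
From Stdlib Require Import Bool Arith Lia Cantor.
From Stdlib Require Import Classical ClassicalEpsilon FunctionalExtensionality.

Section BooleanSets.
Variable E : Type.

Definition bsub (y A : bset E) : Prop := forall e, y e = true -> A e = true.
Definition bdiff (A B : bset E) : bset E := fun e => A e && negb (B e).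
Definition bunion (A B : bset E) : bset E := fun e => A e || B e.
Definition bcup (F : nat -> bset E) : bset E :=
  fun e => if excluded_middle_informative (exists n, F n e = true) then true else false.
Definition pairwise_disjoint (F : nat -> bset E) : Prop :=
  forall m n e, F m e = true -> F n e = true -> m = n.

Lemma bcupP F e : bcup F e = true <-> exists n, F n e = true.
Proof.
  unfold bcup; destruct excluded_middle_informative; split; congruence || tauto.
Qed.

Lemma bsub_bcup F n : bsub (F n) (bcup F).
Proof. intros e He; apply bcupP; eauto. Qed.

Lemma bsub_decreasing (C : nat -> bset E) :
  (forall n, bsub (C (S n)) (C n)) -> forall m n, m <= n -> bsub (C n) (C m).
Proof. intros HC m n Hmn; induction Hmn; intros e He; [exact He | apply IHHmn, HC, He]. Qed.

Lemma bsub_increasing (C : nat -> bset E) :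
  (forall n, bsub (C n) (C (S n))) -> forall m n, m <= n -> bsub (C m) (C n).
Proof. intros HC m n Hmn; induction Hmn; intros e He; [exact He | apply HC, IHHmn, He]. Qed.

Lemma badd_bdiff D R : bsub D R -> D = badd R (bdiff R D).
Proof.
  intro HD; apply functional_extensionality; intro e; unfold badd, bdiff.
  destruct (D e) eqn:De; [rewrite (HD e De)|]; destruct (R e); reflexivity.
Qed.

Lemma badd_bmul_bdiff y B : y = badd (bmul y B) (bdiff y B).
Proof.
  apply functional_extensionality; intro e; unfold badd, bmul, bdiff.
  destruct (y e), (B e); reflexivity.
Qed.

Lemma bmul_bcup_disjoint F y K :
  pairwise_disjoint F -> (forall n, bsub (y n) (F n)) -> bmul (bcup y) (F K) = y K.
Proof.
  intros HF Hy; apply functional_extensionality; intro e; unfold bmul.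
  destruct (y K e) eqn:yKe.
  - rewrite (Hy K e yKe), andb_true_r; apply bsub_bcup with (n := K); exact yKe.
  - destruct (bcup y e) eqn:Ye; [|reflexivity].
    apply bcupP in Ye as [n yne].
    destruct (F K e) eqn:FKe; [|reflexivity].
    rewrite (HF n K e (Hy n e yne) FKe) in yne; congruence.
Qed.

Lemma pairwise_disjoint_lt F :
  (forall m n e, m < n -> F m e = true -> F n e = true -> False) -> pairwise_disjoint F.
Proof.
  intros HF m n e Hm Hn.
  destruct (lt_eq_lt_dec m n) as [[Hlt | Heq] | Hgt]; [exfalso; eauto | exact Heq | exfalso; eauto].
Qed.

Lemma pairwise_disjoint_regroup D :
  pairwise_disjoint D -> pairwise_disjoint (fun j => bcup (fun k => D (to_nat (j, k)))).
Proof.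
  intros HD m n e Hm Hn.
  apply bcupP in Hm as [k Hm]; apply bcupP in Hn as [l Hn].
  pose proof (f_equal of_nat (HD _ _ _ Hm Hn)) as Hml.
  rewrite !cancel_of_to in Hml; congruence.
Qed.

Lemma disjoint_sequence_of_splitting (P : bset E -> Prop) A :
  (forall R, P R -> exists D, bsub D R /\ P D /\ P (bdiff R D)) ->
  P A -> exists F, pairwise_disjoint F /\ forall n, P (F n).
Proof.
  intros Hsplit HA.
  destruct (choice (fun R D => P R -> bsub D R /\ P D /\ P (bdiff R D))) as [piece Hpiece].
  { intro R; destruct (classic (P R)) as [HR | HR].
    - destruct (Hsplit R HR) as [D HD]; exists D; auto.
    - exists R; tauto. }
  pose (rest := fun n => Nat.iter n (fun R => bdiff R (piece R)) A).
  assert (Hrest : forall n, P (rest n)).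
  { induction n; [exact HA | apply (Hpiece _ IHn)]. }
  assert (Hdecr : forall m n, m <= n -> bsub (rest n) (rest m)).
  { apply bsub_decreasing; intros n e He.
    simpl in He; unfold bdiff in He; apply andb_prop in He; tauto. }
  exists (fun n => piece (rest n)); split.
  - apply pairwise_disjoint_lt; intros m n e Hmn Hm Hn.
    destruct (Hpiece _ (Hrest n)) as [Hsub _].
    apply Hsub, (Hdecr (S m) n Hmn) in Hn.
    simpl in Hn; unfold bdiff in Hn; rewrite Hm, andb_false_r in Hn; discriminate.
  - intro n; apply (Hpiece _ (Hrest n)).
Qed.

End BooleanSets.

Arguments bsub {E}.
Arguments bdiff {E}.
Arguments bunion {E}.
Arguments bcup {E}.
Arguments pairwise_disjoint {E}.

Section Exhaustion.
Variables (E : Type) (X : nat -> bset E -> Prop).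
Hypothesis Hincr : forall i (x : bset E), X i x -> X (S i) x.
Hypothesis HR : forall i (x : bset E), Rclos (X i) x -> X (S i) x.
Hypothesis Hunion : forall x : bset E, exists i, X i x.

Lemma X_mono i j x : i <= j -> X i x -> X j x.
Proof. intros Hij; induction Hij; auto. Qed.

Lemma X_badd i j x y : X i x -> X j y -> X (S (max i j)) (badd x y).
Proof.
  intros Hx Hy; apply HR; do 4 right; left.
  exists x, y; split; [apply (X_mono i) | split; [apply (X_mono j) | reflexivity]]; trivial; lia.
Qed.

Lemma X_bmul i j x y : X i x -> X j y -> X (S (max i j)) (bmul x y).
Proof.
  intros Hx Hy; apply HR; do 5 right.
  exists x, y; split; [apply (X_mono i) | split; [apply (X_mono j) | reflexivity]]; trivial; lia.
Qed.

Definition good_at (A : bset E) (j : nat) : Prop := forall y, bsub y A -> X j y.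
Definition good (A : bset E) : Prop := exists j, good_at A j.

Lemma good_at_mono A i j : i <= j -> good_at A i -> good_at A j.
Proof. intros Hij HA y Hy; apply (X_mono i); auto. Qed.

Lemma good_at_bsub A B j : bsub B A -> good_at A j -> good_at B j.
Proof. intros HBA HA y Hy; apply HA; intros e He; auto. Qed.

Lemma good_at_bzero : good_at bzero 1.
Proof.
  intros y Hy.
  replace y with (@bzero E) by (apply functional_extensionality; intro e;
    destruct (y e) eqn:ye; [discriminate (Hy e ye) | reflexivity]).
  apply HR; do 2 right; left; reflexivity.
Qed.

Lemma good_at_cover A B C i j :
  bsub A (bunion B C) -> good_at B i -> good_at C j -> good_at A (S (max i j)).
Proof.
  intros HA HB HC y Hy; rewrite (badd_bmul_bdiff _ y B); apply X_badd.
  - apply HB; intros e He; unfold bmul in He; apply andb_prop in He; tauto.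
  - apply HC; intros e He; unfold bdiff in He; apply andb_prop in He as [ye Bne].
    specialize (HA e (Hy e ye)); unfold bunion in HA.
    destruct (B e); [discriminate | exact HA].
Qed.

Lemma good_index : exists idx, forall A, good A -> good_at A (idx A).
Proof.
  apply (choice (fun A j => good A -> good_at A j)); intro A.
  destruct (classic (good A)) as [[j Hj] | HA]; [exists j | exists 0]; tauto.
Qed.

Lemma not_good_at_witness A j : ~ good_at A j -> exists y, bsub y A /\ ~ X j y.
Proof.
  intro HA; apply NNPP; intro Hno; apply HA; intros y Hy.
  apply NNPP; intro Hy'; apply Hno; eauto.
Qed.

Lemma no_disjoint_bad_sequence F :
  pairwise_disjoint F -> (forall n, ~ good (F n)) -> False.
Proof.
  intros HF Hbad.
  destruct (choice _ Hunion) as [rank Hrank].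
  destruct (choice (fun n y => bsub y (F n) /\ ~ X (S (max n (rank (F n)))) y)) as [y Hy].
  { intro n; apply not_good_at_witness; intro Hg; apply (Hbad n); eexists; exact Hg. }
  destruct (Hunion (bcup y)) as [K HK].
  apply (proj2 (Hy K)).
  rewrite <- (bmul_bcup_disjoint _ F y K HF (fun n => proj1 (Hy n))).
  apply X_bmul; auto.
Qed.

Lemma bad_split S0 :
  (forall G, good G -> good_at G S0) ->
  forall R, ~ good R -> exists D, bsub D R /\ ~ good D /\ ~ good (bdiff R D).
Proof.
  intros Hunif R HRbad.
  destruct (Hunion R) as [r Hr].
  destruct (not_good_at_witness R (S (max r S0))) as [D [HDR HD]].
  { intro Hg; apply HRbad; eexists; exact Hg. }
  exists D; split; [exact HDR | split]; intro Hg; apply HD.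
  - apply (X_mono S0); [lia |]; apply (Hunif D Hg); intros e He; exact He.
  - rewrite (badd_bdiff _ D R HDR); apply X_badd; [exact Hr |].
    apply (Hunif _ Hg); intros e He; exact He.
Qed.

(* U_{n+1} = U_n ∪ G_n with G_n good but not good at the index
   s_n = max (idx U_n) n + 1; then G_n \ U_n cannot be good at n. *)
Lemma disjoint_sequence_of_nonuniform :
  (forall s, exists G, good G /\ ~ good_at G s) ->
  exists D, pairwise_disjoint D /\ forall n, ~ good_at (D n) n.
Proof.
  intro Hnonunif.
  destruct (choice _ Hnonunif) as [pick Hpick].
  destruct good_index as [idx Hidx].
  pose (U := fix U n := match n with
             | 0 => bzero
             | S n => bunion (U n) (pick (S (max (idx (U n)) n)))
             end).
  pose (G := fun n => pick (S (max (idx (U n)) n))).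
  assert (HU : forall n, good (U n)).
  { induction n as [| n IHn]; [exists 1; exact good_at_bzero |].
    eexists; apply (good_at_cover _ (U n) (G n)); [intros e He; exact He | |].
    - apply Hidx, IHn.
    - apply Hidx, Hpick. }
  assert (Hincr_U : forall m n, m <= n -> bsub (U m) (U n)).
  { apply bsub_increasing; intros n e He; simpl; unfold bunion; rewrite He; reflexivity. }
  exists (fun n => bdiff (G n) (U n)); split.
  - apply pairwise_disjoint_lt; intros m n e Hmn Hm Hn.
    unfold bdiff in Hm, Hn; apply andb_prop in Hm as [Gm _]; apply andb_prop in Hn as [_ Un].
    assert (HUm : U (S m) e = true)
      by (simpl; unfold bunion; fold (G m); rewrite Gm, orb_true_r; reflexivity).
    rewrite (Hincr_U _ _ Hmn e HUm) in Un; discriminate.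
  - intros n Hgood; apply (proj2 (Hpick (S (max (idx (U n)) n)))).
    apply (good_at_cover _ (U n) (bdiff (G n) (U n))); [| apply Hidx, HU | exact Hgood].
    intros e He; unfold bunion, bdiff; fold (G n) in He; rewrite He.
    destruct (U n e); reflexivity.
Qed.

Lemma bad_regroup D :
  pairwise_disjoint D -> (forall n, ~ good_at (D n) n) ->
  exists F, pairwise_disjoint F /\ forall j, ~ good (F j).
Proof.
  intros HD Hslow.
  exists (fun j => bcup (fun k => D (to_nat (j, k)))); split.
  - exact (pairwise_disjoint_regroup _ D HD).
  - intros j [J HJ]; apply (Hslow (to_nat (j, J))).
    apply (good_at_mono _ J); [pose proof (to_nat_non_decreasing j J); lia |].
    apply (good_at_bsub _ _ _ (bsub_bcup _ (fun k => D (to_nat (j, k))) J) HJ).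
Qed.

Lemma X_eventually_full : exists i, forall x : bset E, X i x.
Proof.
  destruct (classic (good bone)) as [[j Hj] | Hbad].
  { exists j; intro x; apply Hj; intros e _; reflexivity. }
  exfalso.
  destruct (classic (exists S0, forall G, good G -> good_at G S0)) as [[S0 Hunif] | Hnonunif].
  - destruct (disjoint_sequence_of_splitting _ (fun A => ~ good A) bone (bad_split S0 Hunif) Hbad)
      as [F [HF HFbad]].
    exact (no_disjoint_bad_sequence F HF HFbad).
  - assert (Hslow : forall s, exists G, good G /\ ~ good_at G s).
    { intro s; apply NNPP; intro Hno; apply Hnonunif; exists s.
      intros G HG; apply NNPP; intro HGs; apply Hno; eauto. }
    destruct (disjoint_sequence_of_nonuniform Hslow) as [D [HD HDslow]].
    destruct (bad_regroup D HD HDslow) as [F [HF HFbad]].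
    exact (no_disjoint_bad_sequence F HF HFbad).
Qed.

End Exhaustion.

Theorem mainTheorem5 (E : Type) (X : nat -> bset E -> Prop)
  (Hincr : forall i (x : bset E), X i x -> X (S i) x)
  (HR : forall i (x : bset E), Rclos (X i) x -> X (S i) x)
  (Hunion : forall x : bset E, exists i, X i x) :
  exists i, forall x : bset E, X i x.
Proof. exact (X_eventually_full E X Hincr HR Hunion). Qed.
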